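(* Let $S=\langle n_1<n_2<\cdots<n_e\rangle$ be a numerical semigroup with $\mathrm{msg}(S)=\{n_1<\cdots<n_e\}$, $n_1\geq 3$ and $e\geq 2$. If $S$ is a MANS-semigroup such that $n_e\bmod n_1<n_1-1$, then $n_e+1$ is suitably monotone for $S$.
   Context: $\mathbb{N}=\{0,1,2,\ldots\}$. A numerical semigroup is a subset $S\subseteq\mathbb{N}$ closed under addition, containing $0$, with finite complement; $\langle A\rangle$ is the submonoid generated by $A$; $\mathrm{msg}(S)$ is its unique finite minimal system of generators. For $n\in S\setminus\{0\}$, $\mathrm{Ap}(S,n)=\{s\in S:s-n\notin S\}=\{w(0),\ldots,w(n-1)\}$ with $w(i)$ the least element of $S$ congruent to $i$ mod $n$. $S$ is a MANS-semigroup if $w(1)<\cdots<w(\mathrm{m}(S)-1)$ for $\mathrm{Ap}(S,\mathrm{m}(S))$, $\mathrm{m}(S)$ the least element of $S\setminus\{0\}$. For a MANS-semigroup $S$ with $\mathrm{msg}(S)=\{n_1<\cdots<n_e\}$, $e\geq2$, and $\mathrm{Ap}(S,n_1)=\{w(0),\ldots,w(n_1-1)\}$, $n\in\mathbb{N}$ is suitably monotone for $S$ if (i) $n_e<n$, (ii) $n_e\bmod n_1<n\bmod n_1$, and (iii) $w(n\bmod n_1-1)<n<w(n\bmod n_1)$. $a\bmod b$ is the remainder of the division of $a$ by $b$. *)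

From mathcomp Require Import all_boot.
Set Implicit Arguments. Unset Strict Implicit. Unset Printing Implicit Defensive.

Definition numerical_semigroup (S : nat -> Prop) : Prop :=
  [/\ S 0,
      (forall x y, S x -> S y -> S (x + y)) &
      exists F, forall x, F < x -> S x].

Inductive gen (A : nat -> Prop) : nat -> Prop :=
  | gen0 : gen A 0
  | genS a x : A a -> gen A x -> gen A (a + x).

Definition generates (A : nat -> Prop) (S : nat -> Prop) : Prop :=
  forall x, S x <-> gen A x.

Definition is_msg (S : nat -> Prop) (ns : seq nat) : Prop :=
  generates (fun x => x \in ns) S /\
  forall B : nat -> Prop, (forall x, B x -> x \in ns) -> generates B S ->
    forall x, x \in ns -> B x.

Definition is_multiplicity (S : nat -> Prop) (m : nat) : Prop :=
  [/\ S m, 0 < m & forall s, S s -> 0 < s -> m <= s].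

(* w lists Ap(S,n): for every i < n, w i is the least element of S
   congruent to i modulo n. *)
Definition apery_fun (S : nat -> Prop) (n : nat) (w : nat -> nat) : Prop :=
  forall i, i < n ->
    [/\ S (w i), w i %% n = i & forall s, S s -> s %% n = i -> w i <= s].

Definition MANS (S : nat -> Prop) : Prop :=
  forall m w, is_multiplicity S m -> apery_fun S m w ->
    forall i j, 1 <= i -> i < j -> j <= m - 1 -> w i < w j.

(* n is suitably monotone for S, where msg(S) = {n_1 < ... < n_e} is given by
   the increasing list ns (n_1 = head, n_e = last). *)
Definition suitably_monotone (S : nat -> Prop) (ns : seq nat) (n : nat) : Prop :=
  let n1 := nth 0 ns 0 in
  let ne := last 0 ns in
  forall w, apery_fun S n1 w ->
    [/\ ne < n,
        ne %% n1 < n %% n1 &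
        w (n %% n1 - 1) < n < w (n %% n1)].

(* Let n1 be the multiplicity, ne the largest minimal generator and
   r = ne mod n1 < n1 - 1.  Being a minimal generator, ne is not a sum of two
   nonzero elements of S, which forces ne = w(r) and r > 0.  The MANS property
   gives w(r+1) > w(r) = ne, so w(r+1) lies above every generator and hence
   decomposes; this rules out w(r+1) = ne + 1, because ne + 1 is then
   indecomposable as well.  Hence w(r) = ne < ne + 1 < w(r+1). *)

From mathcomp Require Import all_boot.
From mathcomp Require Import zify.

Set Implicit Arguments.
Unset Strict Implicit.
Unset Printing Implicit Defensive.

Definition irreducible (S : nat -> Prop) (g : nat) : Prop :=
  forall a b, S a -> S b -> 0 < a -> 0 < b -> a + b <> g.

Section SortedBounds.

Variable s : seq nat.
Hypothesis s_sorted : sorted ltn s.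

Let nth_mono : {in [pred n | n < size s] &, {homo nth 0 s : i j / i <= j}}.
Proof. exact: sorted_leq_nth leq_trans leqnn 0 s (sub_sorted ltnW s_sorted). Qed.

Lemma sorted_ltn_head_le x : x \in s -> nth 0 s 0 <= x.
Proof.
move=> xs; have ix : index x s < size s by rewrite index_mem.
by rewrite -(nth_index 0 xs); apply: nth_mono; rewrite ?inE //; apply: leq_ltn_trans ix.
Qed.

Lemma sorted_ltn_le_last x : x \in s -> x <= last 0 s.
Proof.
move=> xs; have ix : index x s < size s by rewrite index_mem.
have s_gt0 : 0 < size s by apply: leq_ltn_trans ix.
rewrite -nth_last -(nth_index 0 xs); apply: nth_mono; rewrite ?inE ?prednK //.
by rewrite -ltnS prednK.
Qed.

Lemma sorted_ltn_head_lt_last : 1 < size s -> nth 0 s 0 < last 0 s.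
Proof.
move=> s_gt1; rewrite -nth_last.
have s_gt0 : 0 < size s by apply: ltnW.
apply: (sorted_ltn_nth ltn_trans 0 s_sorted); rewrite ?inE ?prednK //.
by rewrite -subn1 ltn_subRL.
Qed.

End SortedBounds.

Lemma gen_add A x y : gen A x -> gen A y -> gen A (x + y).
Proof. by elim=> [|a x' Aa _ IH] // gy; rewrite -addnA; apply: genS (IH gy). Qed.

Lemma sub_gen (A B : nat -> Prop) x : (forall a, A a -> B a) -> gen A x -> gen B x.
Proof. by move=> AB; elim=> [|a x' Aa _ IH]; [apply: gen0 | apply: genS (AB _ Aa) IH]. Qed.

Lemma gen_ltn_avoid A g y : gen A y -> y < g -> gen (fun x => A x /\ x <> g) y.
Proof.
elim=> [|a y' Aa _ IH] lt_yg; first exact: gen0.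
by apply: genS; [split=> //; lia | apply: IH; lia].
Qed.

Section Generators.

Variables (S : nat -> Prop) (ns : seq nat).

Lemma generates_mem : generates (fun x => x \in ns) S -> forall g, g \in ns -> S g.
Proof. by move=> gen_ns g gns; apply/gen_ns; rewrite -[g]addn0; apply: genS gns (gen0 _). Qed.

Lemma msg_irreducible g : is_msg S ns -> g \in ns -> irreducible S g.
Proof.
move=> [gen_ns min_ns] gns a b Sa Sb a_gt0 b_gt0 Eab.
pose B x := x \in ns /\ x <> g.
have genB_lt x : S x -> x < g -> gen B x by move=> /gen_ns gx; apply: gen_ltn_avoid.
have genB : generates B S.
  move=> x; split; last by move=> gx; apply/gen_ns; apply: sub_gen gx => y [].
  move=> /gen_ns; elim=> [|y x' ns_y _ IH]; first exact: gen0.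
  have [->|ne_yg] := eqVneq y g; last by apply: genS IH; split=> //; apply/eqP.
  by apply: gen_add IH; rewrite -Eab; apply: gen_add; apply: genB_lt => //; lia.
by have [] := min_ns B (fun x => @proj1 _ _) genB g gns.
Qed.

Lemma irreducible_above_generators m s :
  generates (fun x => x \in ns) S -> (forall x, x \in ns -> x <= m) ->
  S s -> m < s -> ~ irreducible S s.
Proof.
move=> gen_ns le_m /gen_ns; elim=> [|a x ns_a gx IH] // lt_ms irr.
have [a0|a_gt0] := posnP a; first by apply: IH; rewrite // -[x]add0n -a0.
have [x0|x_gt0] := posnP x; first by have := le_m a ns_a; lia.
by apply: (irr a x) => //; [apply: generates_mem | apply/gen_ns].
Qed.

Lemma multiplicity_least_generator n1 :
  generates (fun x => x \in ns) S -> n1 \in ns -> 0 < n1 ->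
  (forall x, x \in ns -> n1 <= x) -> is_multiplicity S n1.
Proof.
move=> gen_ns n1_ns n1_gt0 n1_le; split=> //; first exact: generates_mem n1_ns.
move=> s /gen_ns; elim=> [|a x ns_a _ _] // _.
exact: leq_trans (n1_le a ns_a) (leq_addr _ _).
Qed.

End Generators.

Lemma eq_modn_leq_addmul d x y :
  x = y %[mod d] -> x <= y -> exists k, y = x + k * d.
Proof.
move=> Exy le_xy.
have : y == x %[mod d] by rewrite Exy.
by rewrite eqn_mod_dvd // => /dvdnP [k Ek]; exists k; rewrite -Ek subnKC.
Qed.

Section Apery.

Variables (S : nat -> Prop) (n1 : nat) (w : nat -> nat).
Hypothesis S0 : S 0.
Hypothesis SD : forall x y, S x -> S y -> S (x + y).
Hypothesis mult_n1 : is_multiplicity S n1.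
Hypothesis apery_w : apery_fun S n1 w.
Hypothesis mono_w : forall i j, 1 <= i -> i < j -> j <= n1 - 1 -> w i < w j.

Let n1_gt0 : 0 < n1. Proof. by case: mult_n1. Qed.

Let S_mul k : S (k * n1).
Proof. by case: mult_n1 => Sn1 _ _; elim: k => // k IH; rewrite mulSn; apply: SD. Qed.

Lemma apery_le x s : S s -> s = x %[mod n1] -> w (x %% n1) <= s.
Proof. by move=> Ss Esx; have [_ _ w_min] := apery_w (ltn_pmod x n1_gt0); apply: w_min. Qed.

Lemma apery0 : w 0 = 0.
Proof. by have := apery_le (x:=0) S0 erefl; rewrite mod0n leqn0 => /eqP. Qed.

Lemma apery_mod i : i < n1 -> w i = i %[mod n1].
Proof. by move=> lt_i; have [_ -> _] := apery_w lt_i; rewrite modn_small. Qed.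

Lemma apery_pred_lt b : S b -> 0 < b %% n1 -> w (b %% n1).-1 < b.
Proof.
move=> Sb b_mod_gt0; have b_mod_lt := ltn_pmod b n1_gt0.
have [b_mod_le1|b_mod_gt1] := leqP (b %% n1) 1.
  rewrite (_ : (b %% n1).-1 = 0) ?apery0; last lia.
  exact: leq_trans b_mod_gt0 (leq_mod _ _).
have lt_w : w (b %% n1).-1 < w (b %% n1) by apply: mono_w; lia.
exact: leq_trans lt_w (apery_le Sb erefl).
Qed.

Lemma apery_pred_succ i : 0 < i < n1 -> (w i.-1).+1 = i %[mod n1].
Proof.
move=> /andP [i_gt0 i_lt]; rewrite -addn1 -modnDml apery_mod; last lia.
by rewrite modnDml addn1 prednK.
Qed.

Lemma apery_irreducible g : S g -> irreducible S g -> n1 < g -> w (g %% n1) = g.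
Proof.
move=> Sg irr_g lt_n1g; have [Swr Ewr _] := apery_w (ltn_pmod g n1_gt0).
have [[|k] Eg] := eq_modn_leq_addmul Ewr (apery_le Sg erefl).
  by rewrite mul0n addn0 in Eg.
case: mult_n1 => Sn1 _ _.
have Swk : S (w (g %% n1) + k * n1) by apply: SD.
by rewrite mulSn in Eg; case: (irr_g n1 _ Sn1 Swk) => //; lia.
Qed.

(* In a decomposition a + b = g + 1 = w(r+1): if n1 divides b then
   a + b - n1 is a smaller element of the class of g + 1; otherwise
   c = w((b mod n1) - 1) < b gives a + c = g, contradicting irreducibility. *)
Lemma apery_succ_irreducible g :
  S g -> irreducible S g -> n1 < g -> (g %% n1).+1 < n1 ->
  w (g %% n1).+1 = g + 1 -> irreducible S (g + 1).
Proof.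
move=> Sg irr_g lt_n1g lt_r1 Ew1 a b Sa Sb a_gt0 b_gt0 Eab.
have Ewr := apery_irreducible Sg irr_g lt_n1g.
have [/eqP b_mod0|b_mod_gt0] := posnP (b %% n1).
  have Eb : b = n1 + (b %/ n1).-1 * n1.
    by rewrite -mulSn prednK ?divnK // divn_gt0 //; case: mult_n1 => _ _; apply.
  have Sa' : S (a + (b %/ n1).-1 * n1) by apply: SD.
  have Ea' : a + (b %/ n1).-1 * n1 = g + 1 %[mod n1].
    by rewrite -Eab {2}Eb addnCA modnDl.
  have := apery_le Sa' Ea'.
  rewrite (_ : (g + 1) %% n1 = (g %% n1).+1) ?Ew1; first lia.
  by rewrite -modnDml modn_small addn1.
pose c := w (b %% n1).-1.
have lt_cb : c < b := apery_pred_lt Sb b_mod_gt0.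
have Sc : S c by have [] := apery_w (leq_ltn_trans (leq_pred _) (ltn_pmod b n1_gt0)).
have Ec : a + c = g %[mod n1].
  apply/eqP; rewrite -(eqn_modDr 1) -addnA addn1 -modnDmr /c apery_pred_succ.
    by rewrite modn_mod modnDmr Eab.
  by rewrite b_mod_gt0 ltn_pmod.
have := apery_le (SD Sa Sc) Ec; rewrite Ewr => le_gac.
have [c0|c_gt0] := posnP c.
  by case: mult_n1 => _ _ /(_ b Sb b_gt0); lia.
by apply: (irr_g a c) => //; lia.
Qed.

End Apery.

Theorem proposition4p13 (S : nat -> Prop) (ns : seq nat) :
  numerical_semigroup S ->
  is_msg S ns ->
  sorted ltn ns ->
  2 <= size ns ->
  3 <= nth 0 ns 0 ->
  MANS S ->
  last 0 ns %% nth 0 ns 0 < nth 0 ns 0 - 1 ->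
  suitably_monotone S ns (last 0 ns + 1).
Proof.
move=> [S0 SD _] msg_ns sorted_ns size_ns n1_ge3 mans lt_r1.
rewrite /suitably_monotone /=; set n1 := nth 0 ns 0 in n1_ge3 lt_r1 *.
set ne := last 0 ns in lt_r1 *; set r := ne %% n1 in lt_r1 *; move=> w apery_w.
have ns_gt0 : 0 < size ns by apply: ltnW.
have ne_ns : ne \in ns by rewrite /ne -nth_last mem_nth // prednK.
have gen_ns := msg_ns.1.
have mult_n1 : is_multiplicity S n1 :=
  multiplicity_least_generator gen_ns (mem_nth 0 ns_gt0) (ltnW (ltnW n1_ge3))
    (sorted_ltn_head_le sorted_ns).
have irr_ne := msg_irreducible msg_ns ne_ns.
have lt_n1ne : n1 < ne := sorted_ltn_head_lt_last sorted_ns size_ns.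
have Sne := generates_mem gen_ns ne_ns.
have mono_w := mans n1 w mult_n1 apery_w.
have Ewr : w r = ne by apply: (apery_irreducible S0 SD mult_n1 apery_w).
have r_gt0 : 0 < r.
  by case: (posnP r) Ewr => // ->; rewrite (apery0 S0 mult_n1 apery_w); lia.
have lt_r1n : r.+1 < n1 by lia.
have Ene1 : (ne + 1) %% n1 = r.+1 by rewrite -modnDml modn_small addn1.
have lt_ne_w1 : ne < w r.+1 by rewrite -Ewr mono_w //; lia.
have ne_w1 : w r.+1 <> ne + 1.
  move=> Ew1; have [Sw1 _ _] := apery_w r.+1 lt_r1n.
  apply: (irreducible_above_generators gen_ns (sorted_ltn_le_last sorted_ns) Sw1 lt_ne_w1).
  by rewrite Ew1; apply: (apery_succ_irreducible S0 SD mult_n1 apery_w mono_w).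
rewrite Ene1 subn1 /= Ewr; split; [lia | lia | apply/andP; split; lia].
Qed.
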